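(* Let $\Psi=(\psi_t)$ be a continuous expansive flow on a compact metric space $X$. Then every $\Psi\times\Psi$-invariant Borel probability measure $\nu$ on $X\times X$ is product expansive, i.e. there is $\epsilon>0$ with $\nu(NE^\times(\epsilon))=0$.
   Context: For $x\in X$ and $\epsilon>0$, $\Gamma_\epsilon(x)=\{y\in X: d(\psi_t x,\psi_t y)<\epsilon\ \forall t\in\mathbb R\}$; on $X\times X$ (with the max metric) and the product flow $\psi_t\times\psi_t$, $\Gamma_\epsilon(x,y)$ is defined analogously. $NE(\epsilon)=\{x: \Gamma_\epsilon(x)\not\subset\psi_{[-s,s]}(x)\ \text{for every } s>0\}$ and $NE^\times(\epsilon)=\{(x,y):\Gamma_\epsilon(x,y)\not\subset\psi_{[-s,s]}(x)\times\psi_{[-s,s]}(y)\ \text{for every } s>0\}$. The flow is expansive in the sense that $NE(\epsilon)=\emptyset$ for some $\epsilon>0$ (Bowen–Walters expansivity). *)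

From HB Require Import structures.
From mathcomp Require Import all_boot all_order all_algebra.
From mathcomp Require Import all_classical all_reals all_analysis.
Set Implicit Arguments. Unset Strict Implicit. Unset Printing Implicit Defensive.
Import Order.TTheory GRing.Theory Num.Theory numFieldTopology.Exports.
Local Open Scope classical_set_scope.
Local Open Scope ring_scope.

(* Nonempty (pointed) metric spaces; the point is only needed so that the
   Borel sigma-algebra can be packaged as a mathcomp measurableType. *)
#[short(type="pointedMetricType")]
HB.structure Definition PointedMetric (K : numDomainType) :=
  { M of Pointed M & Metric K M }.

Section Flows.
Context {R : realType} {X : pointedMetricType R}.

Definition is_continuous_flow (psi : R -> X -> X) : Prop :=
  (forall x, psi 0 x = x) /\
  (forall s t x, psi (s + t) x = psi s (psi t x)) /\
  continuous (fun p : R * X => psi p.1 p.2).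

Definition orbit_seg (psi : R -> X -> X) (s : R) (x : X) : set X :=
  [set psi u x | u in [set u : R | - s <= u <= s]].

Definition Gamma (psi : R -> X -> X) (eps : R) (x : X) : set X :=
  [set y | forall t : R, mdist (psi t x) (psi t y) < eps].

Definition NE (psi : R -> X -> X) (eps : R) : set X :=
  [set x | forall s : R, 0 < s -> ~ (Gamma psi eps x `<=` orbit_seg psi s x)].

Definition expansive_flow (psi : R -> X -> X) : Prop :=
  exists2 eps : R, 0 < eps & NE psi eps = set0.

Definition Gamma2 (psi : R -> X -> X) (eps : R) (p : X * X) : set (X * X) :=
  [set q | forall t : R,
     Num.max (mdist (psi t p.1) (psi t q.1)) (mdist (psi t p.2) (psi t q.2)) < eps].

Definition NEx (psi : R -> X -> X) (eps : R) : set (X * X) :=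
  [set p | forall s : R, 0 < s ->
     ~ (Gamma2 psi eps p `<=` orbit_seg psi s p.1 `*` orbit_seg psi s p.2)].

End Flows.

(* Borel sigma-algebra of X x X (product topology = max-metric topology). *)
Definition BorelXX {R : realType} (X : pointedMetricType R) :=
  g_sigma_algebraType (@open (X * X)%type).

From HB Require Import structures.
From mathcomp Require Import all_boot all_order all_algebra.
From mathcomp Require Import all_classical all_reals all_analysis.
Import Order.TTheory GRing.Theory Num.Theory numFieldTopology.Exports.
Local Open Scope classical_set_scope.
Local Open Scope ring_scope.

(* Since Gamma_eps(x,y) is contained in Gamma_eps(x) x Gamma_eps(y), a point
   (x,y) with x, y outside NE(eps) lies outside NE^x(eps), witnessed by the
   larger of the two times.  For an expansive flow NE^x(eps) is therefore
   empty, hence null for every measure. *)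

Section ProductExpansive.
Context {R : realType} {X : pointedMetricType R}.
Variable psi : R -> X -> X.

Lemma orbit_segS (s s' : R) (x : X) :
  s <= s' -> orbit_seg psi s x `<=` orbit_seg psi s' x.
Proof.
move=> ss' _ [u /andP[lesu leus] <-]; exists u => //=.
by rewrite (le_trans _ lesu) ?lerN2 // (le_trans leus).
Qed.

Lemma Gamma2_sub (eps : R) (p : X * X) :
  Gamma2 psi eps p `<=` Gamma psi eps p.1 `*` Gamma psi eps p.2.
Proof.
by move=> q Gq; split=> t; have := Gq t; rewrite gt_max => /andP[].
Qed.

Lemma notNE_orbit_seg (eps : R) (x : X) :
  ~ NE psi eps x -> exists2 s : R, 0 < s & Gamma psi eps x `<=` orbit_seg psi s x.
Proof.
move=> NEx; apply: contrapT => noseg; apply: NEx => s s0 Gs.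
by apply: noseg; exists s.
Qed.

Lemma NEx_sub (eps : R) :
  NEx psi eps `<=` (NE psi eps `*` setT) `|` (setT `*` NE psi eps).
Proof.
move=> [x y] NExy; have [NEx|nNEx] := pselect (NE psi eps x); first by left.
have [NEy|nNEy] := pselect (NE psi eps y); first by right.
have [s1 s10 G1] := @notNE_orbit_seg _ x nNEx.
have [s2 s20 G2] := @notNE_orbit_seg _ y nNEy.
exfalso; apply: (NExy (Num.max s1 s2)); first by rewrite lt_max s10.
move=> q /Gamma2_sub[/= /G1 q1 /G2 q2]; split.
- by apply: orbit_segS q1; rewrite le_max lexx.
- by apply: orbit_segS q2; rewrite le_max lexx orbT.
Qed.

Lemma NEx_set0 (eps : R) : NE psi eps = set0 -> NEx psi eps = set0.
Proof.
move=> NE0; rewrite -subset0 => p /NEx_sub[[]|[_]]; by rewrite NE0.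
Qed.

End ProductExpansive.

Theorem mainTheorem10 (R : realType) (X : pointedMetricType R)
  (psi : R -> X -> X) :
  compact [set: X] ->
  is_continuous_flow psi ->
  expansive_flow psi ->
  forall nu : probability (BorelXX X) R,
    (forall (t : R) (A : set (BorelXX X)), measurable A ->
       nu ((fun p : BorelXX X => ((psi t p.1, psi t p.2) : BorelXX X)) @^-1` A)
       = nu A) ->
    exists2 eps : R, 0 < eps & nu (NEx psi eps) = 0%E.
Proof.
move=> _ _ [eps eps0 NE0] nu _; exists eps => //.
by rewrite NEx_set0 // measure0.
Qed.
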